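(* If $\Gamma$ has a cyclic fractional polymorphism of arity $m>1$, then the lifted language $\Gamma'$ (defined below) also has a cyclic fractional polymorphism of arity $m$.
   Context: $\Gamma$ is a finite set of cost functions $f:D^n\to\mathbb Q\cup\{\infty\}$ over finite $D$; $\mathrm{dom} f=\{x: f(x)<\infty\}$, also viewed as the $\{0,\infty\}$-valued function that is $0$ on $\mathrm{dom} f$. Let $\mathcal I$ be a feasible instance of $\mathrm{VCSP}(\Gamma)$ with variables $V$, constraints $t\in T$ with $f_t\in\Gamma$ of arity $n_t$ on variables $v(t,1),\dots,v(t,n_t)$. $D_v$ is the set of values $\sigma(v)$ over feasible solutions $\sigma$ of $\mathcal I$; $D'_v=\{(v,a):a\in D_v\}$ and $D'=\bigcup_{v\in V}D'_v$. For $n$-ary $f$ over $D$ and $v_1,\dots,v_n\in V$, $f^{\langle v_1,\dots,v_n\rangle}$ on $(D')^n$ equals $f(\hat x)$ at $((v_1,\hat x_1),\dots,(v_n,\hat x_n))$ and $\infty$ elsewhere. $\Gamma'=\bigcup_{t\in T}\{f_t^{\langle v(t,1),\dots,v(t,n_t)\rangle},\mathrm{dom} f_t^{\langle v(t,1),\dots,v(t,n_t)\rangle}\}\cup\{u_{D'_v}:v\in V\}\cup\{=_{D'}\}$, where $u_{D'_v}$ is $0$ on $D'_v$ and $\infty$ elsewhere on $D'$, and $=_{D'}$ is the binary function that is $0$ on equal pairs and $\infty$ otherwise. An $m$-ary fractional polymorphism of a language over a domain $E$ is a probability distribution $\omega$ on operations $g:E^m\to E$ such that for each $f$ in the language and $x^1,\dots,x^m\in\mathrm{dom}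 f$, $\sum_g\omega(g)f(g(x^1,\dots,x^m))\le\frac1m\sum_i f(x^i)$ (componentwise application); it is cyclic if all operations in its support satisfy $g(x_1,\dots,x_m)=g(x_2,\dots,x_m,x_1)$. *)

From HB Require Import structures.
From mathcomp Require Import all_boot all_order all_algebra.
From Stdlib Require List.
Set Implicit Arguments. Unset Strict Implicit. Unset Printing Implicit Defensive.
Import Order.TTheory GRing.Theory Num.Theory.
Local Open Scope ring_scope.

(* A cost function over domain E: arity n and a map E^n -> Q u {oo},
   where None represents oo. *)
Record cfun (E : Type) := CFun { ar : nat; fn : ar.-tuple E -> option rat }.
Arguments CFun {E} ar fn.
Arguments fn {E} c _.
Arguments ar {E} c.

Definition language (E : Type) := seq (cfun E).

Definition op (E : finType) (m : nat) := {ffun m.-tuple E -> E}.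

Definition app_op (E : finType) (m n : nat) (g : op E m)
  (xs : m.-tuple (n.-tuple E)) : n.-tuple E :=
  [tuple g [tuple tnth (tnth xs i) j | i < m] | j < n].

(* value of a finite cost (only used where the cost is finite) *)
Definition fin_val (R : realFieldType) (c : option rat) : R := ratr (odflt 0 c).

(* omega is a probability distribution on m-ary operations, weights in R;
   fractional polymorphism inequality, with convention 0 * oo = 0
   (i.e. the left-hand side is finite iff every g in the support maps
   into dom f). *)
Definition frac_pol (R : realFieldType) (E : finType) (m : nat)
  (L : language E) (w : {ffun op E m -> R}) : Prop :=
  (forall g, 0 <= w g) /\ (\sum_g w g = 1) /\
  forall f, List.In f L ->
  forall xs : m.-tuple ((ar f).-tuple E),
    (forall i, fn f (tnth xs i) != None) ->
    (forall g, 0 < w g -> fn f (app_op g xs) != None) /\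
    \sum_g w g * fin_val R (fn f (app_op g xs))
      <= (m%:R)^-1 * \sum_(i < m) fin_val R (fn f (tnth xs i)).

Definition cyclic_op (E : finType) (m : nat) (g : op E m) : Prop :=
  forall x : m.-tuple E, g x = g [tuple of rot 1 x].

Definition cyclic_frac_pol (R : realFieldType) (E : finType) (m : nat)
  (L : language E) (w : {ffun op E m -> R}) : Prop :=
  frac_pol L w /\ forall g, 0 < w g -> cyclic_op g.

(* An instance: variables V, constraints indexed by T, constraint t has
   cost function ft t (in Gamma) applied to the scope sc t. *)

Definition feasibleb (D V T : finType) (ft : T -> cfun D)
  (sc : forall t, (ar (ft t)).-tuple V) (s : {ffun V -> D}) : bool :=
  [forall t, fn (ft t) (map_tuple s (sc t)) != None].

Definition feasible_inst (D V T : finType) (ft : T -> cfun D)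
  (sc : forall t, (ar (ft t)).-tuple V) : Prop :=
  exists s : {ffun V -> D}, feasibleb sc s.

(* (v,a) \in D' iff a \in D_v *)
Definition inDp (D V T : finType) (ft : T -> cfun D)
  (sc : forall t, (ar (ft t)).-tuple V) : pred (V * D) :=
  fun p => [exists s : {ffun V -> D}, feasibleb sc s && (s p.1 == p.2)].

Definition Dp (D V T : finType) (ft : T -> cfun D)
  (sc : forall t, (ar (ft t)).-tuple V) : finType :=
  {p : V * D | inDp sc p}.

Section Lift.
Variables (D V T : finType) (ft : T -> cfun D)
  (sc : forall t, (ar (ft t)).-tuple V).
Local Notation E := (Dp sc).

Definition lift_cf (f : cfun D) (vs : (ar f).-tuple V) : cfun E :=
  CFun (ar f) (fun y : (ar f).-tuple E =>
    if [forall j, (sval (tnth y j)).1 == tnth vs j]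
    then fn f (map_tuple (fun p : E => (sval p).2) y) else None).

Definition dom_cf (E' : Type) (f : cfun E') : cfun E' :=
  CFun (ar f) (fun x => if fn f x is Some _ then Some 0%R else None).

Definition u_cf (v : V) : cfun E :=
  CFun 1 (fun y => if (sval (tnth y ord0)).1 == v then Some 0%R else None).

Definition eq_cf : cfun E :=
  CFun 2 (fun y => if tnth y ord0 == tnth y (@Ordinal 2 1 isT)
                   then Some 0%R else None).

Definition lifted_language : language E :=
  [seq lift_cf (sc t) | t <- enum T] ++
  [seq dom_cf (lift_cf (sc t)) | t <- enum T] ++
  [seq u_cf v | v <- enum V] ++ [:: eq_cf].
End Lift.

From HB Require Import structures.
From mathcomp Require Import all_boot all_order all_algebra.
From Stdlib Require List.
Import Order.TTheory GRing.Theory Num.Theory.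
Local Open Scope ring_scope.
Set Implicit Arguments. Unset Strict Implicit. Unset Printing Implicit Defensive.

(* Every operation g in the support of a fractional polymorphism of Gamma maps
   feasible solutions of the instance, applied coordinatewise, to a feasible
   solution; hence each D_v is closed under g.  Lifting g to D' by acting on
   the D-components of arguments that share a variable v therefore lands in
   D'_v, keeps cyclicity, and turns every constraint of Gamma' into the
   corresponding constraint of Gamma.  The pushforward of the weights along
   this lifting is the required fractional polymorphism of Gamma'. *)

Section Pushforward.
Variables (R : numDomainType) (A B : finType) (F : A -> B) (w : {ffun A -> R}).

Definition pushforward : {ffun B -> R} := [ffun b => \sum_(a | F a == b) w a].

Lemma sum_pushforward (G : B -> R) :
  \sum_b pushforward b * G b = \sum_a w a * G (F a).
Proof.
rewrite (partition_big F predT) //=; apply: eq_bigr => b _.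
by rewrite ffunE mulr_suml; apply: eq_bigr => a /eqP ->.
Qed.

Lemma sum_pushforward_mass : \sum_b pushforward b = \sum_a w a.
Proof.
by rewrite (partition_big F predT) //=; apply: eq_bigr => b _; rewrite ffunE.
Qed.

Hypothesis w_ge0 : forall a, 0 <= w a.

Lemma pushforward_ge0 b : 0 <= pushforward b.
Proof. by rewrite ffunE sumr_ge0. Qed.

Lemma pushforward_gt0 b : 0 < pushforward b -> exists2 a, F a = b & 0 < w a.
Proof.
case: (pickP (fun a => (F a == b) && (0 < w a))) => [a /andP[/eqP Fa wa] _|Hw].
  by exists a.
rewrite ffunE big1 ?ltxx // => a Fa.
by move: (Hw a); rewrite Fa lt0r w_ge0 andbT => /negbFE/eqP.
Qed.

End Pushforward.

Definition frac_pol_on (R : realFieldType) (E : finType) (m : nat)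
  (w : {ffun op E m -> R}) (f : cfun E) : Prop :=
  forall xs : m.-tuple ((ar f).-tuple E),
    (forall i, fn f (tnth xs i) != None) ->
    (forall g, 0 < w g -> fn f (app_op g xs) != None) /\
    \sum_g w g * fin_val R (fn f (app_op g xs))
      <= (m%:R)^-1 * \sum_(i < m) fin_val R (fn f (tnth xs i)).

Lemma fin_val_crisp (R : realFieldType) (b : bool) :
  fin_val R (if b then Some 0%R else None) = 0.
Proof. by case: b; rewrite /fin_val rmorph0. Qed.

Lemma fin_val_dom_cf (R : realFieldType) (E : Type) (f : cfun E) x :
  fin_val R (fn (dom_cf f) x) = 0.
Proof. by rewrite /fin_val /=; case: (fn f x) => [_|] /=; rewrite rmorph0. Qed.

Section CrispConstraints.
Variables (R : realFieldType) (E : finType) (m : nat) (w : {ffun op E m -> R}).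

Lemma frac_pol_on_crisp (f : cfun E) :
  (forall x, fin_val R (fn f x) = 0) ->
  (forall xs : m.-tuple ((ar f).-tuple E), (forall i, fn f (tnth xs i) != None) ->
     forall g, 0 < w g -> fn f (app_op g xs) != None) ->
  frac_pol_on w f.
Proof.
move=> f0 Hdom xs Hxs; split; first exact: Hdom.
by rewrite !big1 ?mulr0 // => i _; rewrite f0 mulr0.
Qed.

Lemma frac_pol_on_dom_cf (f : cfun E) : frac_pol_on w f -> frac_pol_on w (dom_cf f).
Proof.
have dom_finite x : (fn (dom_cf f) x != None) = (fn f x != None).
  by rewrite /=; case: (fn f x).
move=> Hf; apply: frac_pol_on_crisp => [x|xs Hxs g wg]; first exact: fin_val_dom_cf.
rewrite dom_finite; apply: (proj1 (Hf xs _)) wg => i.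
by rewrite -dom_finite.
Qed.

End CrispConstraints.

Section LiftOp.
Variables (D V T : finType) (ft : T -> cfun D)
  (sc : forall t, (ar (ft t)).-tuple V) (n : nat).
Local Notation E := (Dp sc).
Local Notation m := n.+1.

Definition var_of (e : E) : V := (sval e).1.
Definition val_of (e : E) : D := (sval e).2.

Definition closed_op (g : op D m) : Prop := forall v (a : m.-tuple D),
  (forall i, inDp sc (v, tnth a i)) -> inDp sc (v, g a).

(* Unlike [tnth c ord0], this representative of [c] does not move under
   rotation of [c]. *)
Definition pick_in (c : m.-tuple E) : E := odflt (tnth c ord0) [pick e | e \in c].

(* The fallback value only matters on arguments with different variables or
   outside the closedness of [g], where nothing is required of it. *)
Definition lift_op (g : op D m) : op E m := [ffun c =>
  odflt (pick_in c) (insub (var_of (pick_in c), g (map_tuple val_of c)))].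

Lemma pick_in_mem (c : m.-tuple E) : pick_in c \in c.
Proof. by rewrite /pick_in; case: pickP => [e ->|_] //=; exact: mem_tnth. Qed.

Lemma pick_in_rot (c : m.-tuple E) : pick_in [tuple of rot 1 c] = pick_in c.
Proof.
rewrite /pick_in (@eq_pick _ _ (fun e => e \in c)); last first.
  by move=> e; rewrite /= mem_rot.
by case: pickP => // no_elt; have := no_elt (tnth c ord0); rewrite mem_tnth.
Qed.

Lemma lift_op_cyclic g : cyclic_op g -> cyclic_op (lift_op g).
Proof.
move=> cyc_g c; rewrite !ffunE pick_in_rot.
have -> : map_tuple val_of [tuple of rot 1 c] = [tuple of rot 1 (map_tuple val_of c)].
  by apply: val_inj; rewrite /= map_rot.
by rewrite -cyc_g.
Qed.

Lemma lift_opE g (c : m.-tuple E) v :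
  closed_op g -> (forall i, var_of (tnth c i) = v) ->
  sval (lift_op g c) = (v, g (map_tuple val_of c)).
Proof.
move=> closed_g c_v; rewrite ffunE.
have -> : var_of (pick_in c) = v by case/tnthP: (pick_in_mem c) => i ->.
case: insubP => [u _ -> //|]; case/negP; apply: closed_g => i.
rewrite tnth_map -(c_v i) /var_of /val_of -surjective_pairing.
exact: valP.
Qed.

Lemma app_lift_opE g k (xs : m.-tuple (k.-tuple E)) (vs : k.-tuple V) j :
  closed_op g -> (forall i j, var_of (tnth (tnth xs i) j) = tnth vs j) ->
  sval (tnth (app_op (lift_op g) xs) j)
    = (tnth vs j, tnth (app_op g (map_tuple (map_tuple val_of) xs)) j).
Proof.
move=> closed_g xs_vs; rewrite !tnth_mktuple (lift_opE (v := tnth vs j)) //.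
  congr pair; congr (g _); apply: eq_from_tnth => i.
  by rewrite !(tnth_map, tnth_mktuple).
by move=> i; rewrite tnth_mktuple.
Qed.

Lemma lift_cf_finite (f : cfun D) (vs : (ar f).-tuple V) x :
  fn (lift_cf sc vs) x != None ->
  (forall j, var_of (tnth x j) = tnth vs j) /\
  fn (lift_cf sc vs) x = fn f (map_tuple val_of x).
Proof.
by rewrite /=; case: ifP => // /forallP x_vs _; split=> [j|//]; apply/eqP/x_vs.
Qed.

Lemma lift_cf_app_lift_op g (f : cfun D) (vs : (ar f).-tuple V)
    (xs : m.-tuple ((ar f).-tuple E)) :
  closed_op g -> (forall i j, var_of (tnth (tnth xs i) j) = tnth vs j) ->
  fn (lift_cf sc vs) (app_op (lift_op g) xs)
    = fn f (app_op g (map_tuple (map_tuple val_of) xs)).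
Proof.
move=> closed_g xs_vs; have col := app_lift_opE _ closed_g xs_vs.
rewrite /= (_ : [forall j, _] = true); last by apply/forallP => j; rewrite col.
by congr (fn f _); apply: eq_from_tnth => j; rewrite tnth_map col.
Qed.

Lemma frac_pol_on_eq_cf (R : realFieldType) (w : {ffun op E m -> R}) :
  frac_pol_on w (eq_cf sc).
Proof.
apply: frac_pol_on_crisp => [x|xs Hxs g _]; first exact: fin_val_crisp.
rewrite /= /app_op !tnth_mktuple.
suff -> : [tuple tnth (tnth xs i) ord0 | i < m]
        = [tuple tnth (tnth xs i) (@Ordinal 2 1 isT) | i < m] by rewrite eqxx.
apply: eq_from_tnth => i; rewrite !tnth_mktuple.
by move: (Hxs i); rewrite /=; case: ifP => // /eqP.
Qed.

Section Support.
Variables (R : realFieldType) (Gamma : language D)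
  (Hft : forall t, List.In (ft t) Gamma) (w : {ffun op D m -> R}).

Lemma frac_pol_closed_op g : frac_pol Gamma w -> 0 < w g -> closed_op g.
Proof.
move=> [_ [_ Hpol]] wg v a Ha.
have Hsol i : exists s : {ffun V -> D}, feasibleb sc s && (s v == tnth a i).
  by apply/existsP; apply: Ha.
pose S i := xchoose (Hsol i).
have S_feas i : feasibleb sc (S i) by case/andP: (xchooseP (Hsol i)).
have S_v i : S i v = tnth a i by case/andP: (xchooseP (Hsol i)) => _ /eqP.
apply/existsP; exists [ffun u => g [tuple S i u | i < m]]; apply/andP; split.
  apply/forallP => t; pose xs := [tuple map_tuple (S i) (sc t) | i < m].
  have xs_feas i : fn (ft t) (tnth xs i) != None.
    by rewrite tnth_mktuple; apply: (forallP (S_feas i)).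
  suff <- : app_op g xs = map_tuple [ffun u => g [tuple S i u | i < m]] (sc t).
    exact: (proj1 (Hpol _ (Hft t) xs xs_feas)).
  apply: eq_from_tnth => j; rewrite tnth_mktuple tnth_map ffunE.
  by congr (g _); apply: eq_from_tnth => i; rewrite !tnth_mktuple tnth_map.
rewrite /= ffunE; apply/eqP; congr (g _); apply: eq_from_tnth => i.
by rewrite tnth_mktuple S_v.
Qed.

End Support.

Section LiftedWeights.
Variables (R : realFieldType) (w : {ffun op D m -> R})
  (w_ge0 : forall g, 0 <= w g) (supp_closed : forall g, 0 < w g -> closed_op g).
Local Notation w' := (pushforward lift_op w).

Lemma frac_pol_on_lift_cf (f : cfun D) (vs : (ar f).-tuple V) :
  frac_pol_on w f -> frac_pol_on w' (lift_cf sc vs).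
Proof.
move=> Hf xs Hxs.
have xs_vs i j : var_of (tnth (tnth xs i) j) = tnth vs j.
  exact: (proj1 (lift_cf_finite (Hxs i))).
pose ys := map_tuple (map_tuple val_of) xs.
have xs_ys i : fn (lift_cf sc vs) (tnth xs i) = fn f (tnth ys i).
  by rewrite tnth_map; case: (lift_cf_finite (Hxs i)).
have ys_finite i : fn f (tnth ys i) != None by rewrite -xs_ys.
have [ys_dom ys_ineq] := Hf ys ys_finite.
have app_ys g :
  0 < w g -> fn (lift_cf sc vs) (app_op (lift_op g) xs) = fn f (app_op g ys).
  by move=> wg; rewrite (lift_cf_app_lift_op (supp_closed wg) xs_vs).
split=> [g' /pushforward_gt0 [// | g <- wg]|]; first by rewrite app_ys // ys_dom.
rewrite sum_pushforward (eq_bigr (fun g => w g * fin_val R (fn f (app_op g ys)))).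
  by rewrite (eq_bigr (fun i => fin_val R (fn f (tnth ys i)))) // => i _; rewrite xs_ys.
move=> g _; have := w_ge0 g; rewrite le0r => /orP[/eqP ->|wg]; first by rewrite !mul0r.
by rewrite app_ys.
Qed.

Lemma frac_pol_on_u_cf v : frac_pol_on w' (u_cf sc v).
Proof.
have u_v (x : 1.-tuple E) : fn (u_cf sc v) x != None -> var_of (tnth x ord0) = v.
  by rewrite /=; case: ifP => // /eqP.
apply: frac_pol_on_crisp => [x|xs Hxs g' /pushforward_gt0 [// | g <- wg]].
  exact: fin_val_crisp.
have xs_v i j : var_of (tnth (tnth xs i) j) = tnth [tuple v] j.
  by rewrite (ord1 j); apply/u_v/Hxs.
by rewrite /= (app_lift_opE ord0 (supp_closed wg) xs_v) eqxx.
Qed.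

End LiftedWeights.

Lemma lift_cyclic_frac_pol (R : realFieldType) (Gamma : language D)
    (Hft : forall t, List.In (ft t) Gamma) (w : {ffun op D m -> R}) :
  cyclic_frac_pol Gamma w ->
  cyclic_frac_pol (lifted_language sc) (pushforward lift_op w).
Proof.
move=> [[w_ge0 [w_sum Hpol]] w_cyc].
have supp_closed g :=
  @frac_pol_closed_op R Gamma Hft w g (conj w_ge0 (conj w_sum Hpol)).
split=> [|g' /pushforward_gt0 [// | g <- wg]]; last exact/lift_op_cyclic/w_cyc.
split; first exact: pushforward_ge0.
split; first by rewrite sum_pushforward_mass.
suff lifted_on f :
    List.In f (lifted_language sc) -> frac_pol_on (pushforward lift_op w) f.
  exact: lifted_on.
rewrite /lifted_language => /(List.in_app_or _ _ _) [/List.in_map_iff [t [<- _]]|].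
  exact: frac_pol_on_lift_cf (Hpol _ (Hft t)).
move=> /(List.in_app_or _ _ _) [/List.in_map_iff [t [<- _]]|].
  exact/frac_pol_on_dom_cf/frac_pol_on_lift_cf/(Hpol _ (Hft t)).
move=> /(List.in_app_or _ _ _) [/List.in_map_iff [v [<- _]]|[<-|//]].
  exact: frac_pol_on_u_cf.
exact: frac_pol_on_eq_cf.
Qed.

End LiftOp.

Theorem lemma3p4 (R : realFieldType) (D : finType) (Gamma : language D)
  (V T : finType) (ft : T -> cfun D) (Hft : forall t, List.In (ft t) Gamma)
  (sc : forall t, (ar (ft t)).-tuple V)
  (Hfeas : feasible_inst sc) (m : nat) (Hm : (1 < m)%N) :
  (exists w : {ffun op D m -> R}, cyclic_frac_pol Gamma w) ->
  exists w' : {ffun op (Dp sc) m -> R}, cyclic_frac_pol (lifted_language sc) w'.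
Proof.
case: m Hm => // n _ [w Hw].
by exists (pushforward (@lift_op _ _ _ _ sc n) w); apply: lift_cyclic_frac_pol Hw.
Qed.
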